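(* Let $R$ be a commutative ring and $f\in R$. If $Rf^n$ is a projective $R$-module for some $n\geq 1$, then for every $k\geq n$ the $R$-module $Rf^k$ is canonically isomorphic to $Rf^n$ (equivalently, $\operatorname{Ann}(f^k)=\operatorname{Ann}(f^n)$ for all $k\geq n$). *)

From HB Require Import structures.
From mathcomp Require Import all_boot all_order all_algebra.
Set Implicit Arguments. Unset Strict Implicit. Unset Printing Implicit Defensive.
Import GRing.Theory.
Local Open Scope ring_scope.

Definition principal_ideal (R : comPzRingType) (a : R) : R -> Prop :=
  fun x => exists r : R, x = r * a.

(* An R-linear map from a submodule S of R (given by a predicate on R) to an
   R-module N is represented by a function h : R -> N that is R-linear on S;
   its values outside S are irrelevant. *)
Definition linear_on (R : comPzRingType) (S : R -> Prop) (N : lmodType R)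
  (h : R -> N) : Prop :=
  forall (c : R) (x y : R), S x -> S y -> h (c * x + y) = c *: h x + h y.

Definition projective_submodule (R : comPzRingType) (S : R -> Prop) : Prop :=
  forall (M N : lmodType R) (g : {linear M -> N}),
    (forall y : N, exists x : M, g x = y) ->
    forall h : R -> N, linear_on S h ->
    exists l : R -> M, linear_on S l /\ (forall x, S x -> g (l x) = h x).

From HB Require Import structures.
From mathcomp Require Import all_boot all_order all_algebra.
From mathcomp Require Import boolp.
Import GRing.Theory.
Local Open Scope ring_scope.

(** Projectivity of [R a] splits the surjection [R -> R a, r |-> r a]; the
    splitting sends [a] to some [u] with [u a = a] that is killed by
    [Ann(a)]. For [a = f^n] with [n >= 1], if [x f^(n+1) = 0] then [x f] lies
    in [Ann(f^n)], so [x f u = 0] and [x f^n = x u f^n = (x f u) f^(n-1) = 0].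
    Thus the chain [Ann(f^k)] is stationary from [n] on, which is exactly
    injectivity of multiplication by [f^(k-n)] on [R f^n]; its image is
    [R f^k] in any case. *)

Section CyclicSubmodule.
Context {R : comPzRingType} {a : R}.

Definition principal_idealb : pred R^o := fun x => `[< principal_ideal a x >].

Lemma principal_idealP x : reflect (principal_ideal a x) (x \in principal_idealb).
Proof. exact: asboolP. Qed.

Lemma principal_ideal_submod_closed : submod_closed principal_idealb.
Proof.
split; first by apply/principal_idealP; exists 0; rewrite mul0r.
move=> c x y /principal_idealP[r ->] /principal_idealP[s ->].
by apply/principal_idealP; exists (c * r + s); rewrite mulrDl -mulrA.
Qed.

HB.instance Definition _ := GRing.isSubmodClosed.Build R R^o principal_idealb
  (GRing.submod_closed_semi principal_ideal_submod_closed).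

Inductive cyclic_submod : predArgType := CyclicSubmod x & x \in principal_idealb.
Definition cyclic_val (u : cyclic_submod) : R^o := let: CyclicSubmod x _ := u in x.

HB.instance Definition _ := [isSub for cyclic_val].
HB.instance Definition _ := [Choice of cyclic_submod by <:].
HB.instance Definition _ := [SubChoice_isSubLmodule of cyclic_submod by <:].

Lemma mulr_in_principal (r : R^o) : r * a \in principal_idealb.
Proof. by apply/principal_idealP; exists r. Qed.

Definition mul_generator (r : R^o) : cyclic_submod := Sub (r * a) (mulr_in_principal r).

Lemma mul_generator_is_linear : linear mul_generator.
Proof. by move=> c r s; apply: val_inj; rewrite /= mulrDl -mulrA. Qed.

HB.instance Definition _ := GRing.isLinear.Build R R^o cyclic_submod *:%R
  mul_generator mul_generator_is_linear.

Lemma mul_generator_surj (u : cyclic_submod) : exists r, mul_generator r = u.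
Proof.
by have /principal_idealP[r ex] := valP u; exists r; apply: val_inj; rewrite ex.
Qed.

Lemma linear_on_insubd : linear_on (principal_ideal a) (insubd (0 : cyclic_submod)).
Proof.
move=> c x y /principal_idealP Px /principal_idealP Py; apply: val_inj.
by rewrite /= !insubdK ?rpredD ?rpredZ.
Qed.

Lemma projective_principal_split : projective_submodule (principal_ideal a) ->
  exists u : R, u * a = a /\ forall y, y * a = 0 -> y * u = 0.
Proof.
move=> /(_ _ _ mul_generator mul_generator_surj _ linear_on_insubd) [l [l_lin l_lift]].
have Pa : principal_ideal a a by exists 1; rewrite mul1r.
have P0 : principal_ideal a 0 by exists 0; rewrite mul0r.
have l0 : l 0 = 0 by have := l_lin (-1) 0 0 P0 P0; rewrite mulr0 add0r scaleN1r addNr.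
exists (l a); split=> [|y ya].
  by have /(congr1 val) := l_lift a Pa; rewrite /= insubdK //; exact/principal_idealP.
by have := l_lin y a 0 Pa P0; rewrite addr0 ya l0 addr0 => /esym.
Qed.
End CyclicSubmodule.

Section AnnihilatorOfPowers.
Context {R : comPzRingType} {f : R}.

Lemma ann_exp_succ {m : nat} {u : R} :
  u * f ^+ m.+1 = f ^+ m.+1 -> (forall y, y * f ^+ m.+1 = 0 -> y * u = 0) ->
  forall x, x * f ^+ m.+2 = 0 -> x * f ^+ m.+1 = 0.
Proof.
move=> uf uann x xf2.
have xfu : x * f * u = 0 by apply: uann; rewrite -mulrA -exprS.
by rewrite -uf exprS !mulrA -(mulrA x) (mulrC u) mulrA xfu !mul0r.
Qed.

Lemma ann_exp_stable {n : nat} :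
  (forall x, x * f ^+ n.+1 = 0 -> x * f ^+ n = 0) ->
  forall k, (n <= k)%N -> forall x, x * f ^+ k = 0 <-> x * f ^+ n = 0.
Proof.
move=> ann_succ k nk; rewrite -(subnK nk).
elim: (k - n)%N => [|d IH] x; first by rewrite add0n.
rewrite addSn exprS mulrA; apply: iff_trans (IH (x * f)) _; rewrite -mulrA -exprS.
by split=> [/ann_succ // | xf]; rewrite exprSr mulrA xf mul0r.
Qed.

End AnnihilatorOfPowers.

Lemma mulr_inj_principal (R : comPzRingType) (a b : R) :
  (forall x, x * (b * a) = 0 -> x * a = 0) ->
  forall x y, principal_ideal a x -> principal_ideal a y -> b * x = b * y -> x = y.
Proof.
move=> ann _ _ [r ->] [s ->] e; apply/eqP; rewrite -subr_eq0 -mulrBl; apply/eqP/ann.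
by rewrite mulrBl mulrCA e -mulrCA subrr.
Qed.

Lemma principal_mulr_image (R : comPzRingType) (a b z : R) :
  principal_ideal (b * a) z -> exists2 x, principal_ideal a x & b * x = z.
Proof. by move=> [r ->]; exists (r * a); [exists r | rewrite mulrCA mulrA]. Qed.

Theorem proposition2p8 (R : comPzRingType) (f : R) (n : nat) :
  (1 <= n)%N ->
  projective_submodule (principal_ideal (f ^+ n)) ->
  forall k : nat, (n <= k)%N ->
    (* the canonical map R f^n -> R f^k, x |-> f^(k-n) x, is an isomorphism *)
    ((forall x y : R, principal_ideal (f ^+ n) x -> principal_ideal (f ^+ n) y ->
        f ^+ (k - n) * x = f ^+ (k - n) * y -> x = y) /\
     (forall z : R, principal_ideal (f ^+ k) z ->
        exists2 x : R, principal_ideal (f ^+ n) x & f ^+ (k - n) * x = z))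
    /\
    (* equivalently, Ann(f^k) = Ann(f^n) *)
    (forall x : R, x * f ^+ k = 0 <-> x * f ^+ n = 0).
Proof.
move=> n_gt0 proj_fn k nk.
have [u [ufn uann]] := projective_principal_split proj_fn.
have ann : forall x, x * f ^+ k = 0 <-> x * f ^+ n = 0.
  case: n n_gt0 {proj_fn} nk ufn uann => // m _ mk ufn uann.
  exact: ann_exp_stable (ann_exp_succ ufn uann) _ mk.
have fk : f ^+ k = f ^+ (k - n) * f ^+ n by rewrite -exprD subnK.
split=> //; split=> [|z]; last by rewrite fk; apply: principal_mulr_image.
by apply: mulr_inj_principal => x; rewrite -fk => /ann.
Qed.
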